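(* Let $k\in\mathbb{N}$ and let $\ell\colon(0,\infty)\to[0,\infty)$ be continuously differentiable on its open support $\operatorname{supp}\ell$ with $\ell'(t)<0$ for all $t\in\operatorname{supp}\ell$. Define $\psi\colon\operatorname{supp}\ell\to\mathbb{R}$ by $\psi(t)=\dfrac{t\,\ell'(t)}{\ell(t)^{1-1/k}}$. Then $\ell\in\Lambda_k$ if and only if $\psi$ is decreasing.
   Context: $\operatorname{supp}\ell=(0,\sup\{t>0:\ell(t)>0\})$. The class $\Lambda_k$ ($k\in\mathbb{N}$) consists of all continuous $\ell\colon(0,\infty)\to[0,\infty]$ such that (i) $\ell$ is strictly decreasing on $\operatorname{supp}\ell$, so that the inverse $\ell^{-1}$ exists on $(0,\|\ell\|_\infty)$ with $\|\ell\|_\infty=\sup_{s>0}\ell(s)$; and (ii) the function $g\colon(0,\|\ell\|_\infty^{1/k})\to\operatorname{supp}\ell$, $g(s)=\ell^{-1}(s^k)$, is log-concave (i.e. $\log g$ is concave). *)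

From HB Require Import structures.
From mathcomp Require Import all_boot all_order all_algebra.
From mathcomp Require Import all_classical all_reals all_analysis.
Set Implicit Arguments. Unset Strict Implicit. Unset Printing Implicit Defensive.
Import Order.TTheory GRing.Theory Num.Theory.
Import numFieldNormedType.Exports.
Local Open Scope classical_set_scope.
Local Open Scope ring_scope.

(* ell : (0,oo) -> [0,oo) is modelled as a function R -> R of which only
   the values at t > 0 matter. *)

(* sup { t > 0 : ell t > 0 }, in the extended reals (may be +oo, or -oo
   for the empty set). *)
Definition supp_bound (R : realType) (l : R -> R) : \bar R :=
  ereal_sup ((fun s : R => s%:E) @` [set s | 0 < s /\ 0 < l s]).

Definition supp_of (R : realType) (l : R -> R) : set R :=
  [set t | 0 < t /\ (t%:E < supp_bound l)%E].

Definition sup_norm (R : realType) (l : R -> R) : \bar R :=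
  ereal_sup ((fun s : R => (l s)%:E) @` [set s | 0 < s]).

(* Domain (0, ||ell||_oo^{1/k}) of g; for s > 0 and k >= 1,
   s < ||ell||_oo^{1/k}  iff  s^k < ||ell||_oo. *)
Definition g_dom (R : realType) (k : nat) (l : R -> R) : set R :=
  [set s | 0 < s /\ ((s ^+ k)%:E < sup_norm l)%E].

(* Condition (ii): the function
   g(s) = ell^{-1}(s^k) : g_dom -> supp ell exists (i.e. ell^{-1}(s^k) is
   defined for all s in the domain) and log g is concave.  Since ell is
   strictly decreasing (hence injective) on supp ell, such g is unique on
   g_dom, so the existential quantifier names exactly ell^{-1}(s^k). *)
Definition in_Lambda (R : realType) (k : nat) (l : R -> R) : Prop :=
  [/\ (forall t, 0 < t -> 0 <= l t),
      (forall t, 0 < t -> {for t, continuous l}),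
      (forall s t, supp_of l s -> supp_of l t -> s < t -> l t < l s) &
      exists g : R -> R,
        (forall s, g_dom k l s -> supp_of l (g s) /\ l (g s) = s ^+ k) /\
        (forall x y a, g_dom k l x -> g_dom k l y -> 0 <= a -> a <= 1 ->
           a * ln (g x) + (1 - a) * ln (g y)
             <= ln (g (a * x + (1 - a) * y)))].

Definition psi (R : realType) (k : nat) (l : R -> R) (t : R) : R :=
  t * (derive1 l t) / (l t) `^ (1 - k%:R^-1).

From HB Require Import structures.
From mathcomp Require Import all_boot all_order all_algebra.
From mathcomp Require Import all_classical all_reals all_analysis.
From mathcomp Require Import ring lra.
Import Order.TTheory GRing.Theory Num.Theory.
Import numFieldNormedType.Exports.
Local Open Scope classical_set_scope.
Local Open Scope ring_scope.

(* Write lroot t = l(t)^(1/k).  It is strictly decreasing on supp l, and the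
   function g of the class Lambda_k is its inverse.  Cauchy's mean value theorem
   for ln and lroot on [a, b] in supp l shows that the chord of ln o g over
   [lroot b, lroot a] has slope k / psi(tau) for some tau in (a, b).  Since
   psi < 0 and g reverses the order, the chord slopes of ln o g decrease
   exactly when psi decreases; for the converse one lets the chords shrink and
   uses the continuity of psi.
   What remains is that g is defined on all of (0, ||l||^(1/k)) when psi
   decreases, i.e. that l tends to 0 at the end of its support.  On an
   unbounded support, psi <= psi(u) < 0 together with l >= y > 0 would give
   t l'(t) <= -c < 0 on [u, oo), hence l(t) <= l(u) - c ln(t/u), which
   eventually becomes negative. *)

Set Implicit Arguments.
Unset Strict Implicit.
Unset Printing Implicit Defensive.

Section Slopes.
Variable R : realFieldType.
Implicit Types (D : set R) (F : R -> R).

Definition slope F (x y : R) : R := (F y - F x) / (y - x).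

Definition concave_on D F := forall x y a, D x -> D y -> 0 <= a -> a <= 1 ->
  a * F x + (1 - a) * F y <= F (a * x + (1 - a) * y).

Lemma slopeC F x y : slope F x y = slope F y x.
Proof. by rewrite /slope -[F y - F x]opprB -[y - x]opprB invrN mulrNN. Qed.

Lemma slope_le3P F x z y : x < z -> z < y ->
  (slope F z y <= slope F x z) = ((y - z) * F x + (z - x) * F y <= (y - x) * F z).
Proof.
move=> xz zy; rewrite /slope ler_pdivrMr ?subr_gt0 // mulrAC ler_pdivlMr ?subr_gt0 //.
by rewrite -subr_ge0 -[X in _ = X]subr_ge0; congr (0 <= _); ring.
Qed.

Lemma concave_slope_le3 D F :
  concave_on D F ->
  forall x z y, D x -> D y -> x < z -> z < y -> slope F z y <= slope F x z.
Proof.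
move=> Fconc x z y Dx Dy xz zy; rewrite slope_le3P //.
have yx : 0 < y - x by lra.
pose a := (y - z) / (y - x).
have a0 : 0 <= a by rewrite divr_ge0 //; lra.
have a1 : a <= 1 by rewrite ler_pdivrMr // mul1r; lra.
have Ez : a * x + (1 - a) * y = z by rewrite /a; field; rewrite gt_eqF.
have -> : (y - z) * F x + (z - x) * F y = (y - x) * (a * F x + (1 - a) * F y).
  by rewrite /a; field; rewrite gt_eqF.
by rewrite ler_pM2l // -Ez; exact: Fconc.
Qed.

Lemma concave_slope_le4 D F x1 x2 x3 x4 :
  concave_on D F ->
  D x1 -> D x2 -> D x3 -> D x4 -> x1 < x2 -> x2 < x3 -> x3 < x4 ->
  slope F x3 x4 <= slope F x1 x2.
Proof.
move=> Fconc D1 D2 D3 D4 x12 x23 x34.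
apply: (le_trans (concave_slope_le3 Fconc D2 D4 x23 x34)).
exact: (concave_slope_le3 Fconc D1 D3 x12 x23).
Qed.

Lemma concave_of_slope_le3 D F :
  (forall x y z, D x -> D y -> x <= z -> z <= y -> D z) ->
  (forall x z y, D x -> D z -> D y -> x < z -> z < y -> slope F z y <= slope F x z) ->
  concave_on D F.
Proof.
move=> Dconv Fslope.
suff Hlt x y a : D x -> D y -> x < y -> 0 < a -> a < 1 ->
    a * F x + (1 - a) * F y <= F (a * x + (1 - a) * y).
  move=> x y a Dx Dy a_ge0 a_le1.
  have [->|a_neq0] := eqVneq a 0; first by rewrite !mul0r !add0r subr0 !mul1r.
  have [->|a_neq1] := eqVneq a 1; first by rewrite subrr !mul0r !addr0 !mul1r.
  have a0 : 0 < a by rewrite lt_neqAle eq_sym a_neq0.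
  have a1 : a < 1 by rewrite lt_neqAle a_neq1.
  case: (ltgtP x y) => [xy|yx|<-]; first exact: Hlt.
    have := Hlt y x (1 - a) Dy Dx yx ltac:(lra) ltac:(lra).
    have -> : 1 - (1 - a) = a by ring.
    by rewrite addrC [(1 - a) * y + _]addrC.
  by rewrite -!mulrDl addrC subrK !mul1r.
move=> Dx Dy xy a0 a1; set z := a * x + (1 - a) * y.
have xz : x < z by rewrite /z; nra.
have zy : z < y by rewrite /z; nra.
have := Fslope x z y Dx (Dconv x y z Dx Dy (ltW xz) (ltW zy)) Dy xz zy.
rewrite slope_le3P //.
have -> : (y - z) * F x + (z - x) * F y = (y - x) * (a * F x + (1 - a) * F y).
  by rewrite /z; ring.
by rewrite ler_pM2l // subr_gt0.
Qed.

End Slopes.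

Lemma ler_pdiv2l_neg (R : numFieldType) (c p q : R) :
  0 < c -> p < 0 -> q < 0 -> (c / p <= c / q) = (q <= p).
Proof. by move=> c0 p0 q0; rewrite ler_pM2l // lef_nV2 ?negrE. Qed.

Lemma continuous_ball_gt (R : realType) (f : R -> R) t z :
  {for t, continuous f} -> z < f t ->
  exists2 d, 0 < d & forall x, `|t - x| < d -> z < f x.
Proof.
(* the Filter instance on [nbhs t] is not found by inference here *)
move=> ft zt; have /nbhs_ballP[d d0 Hd] := cvgr_gt (FF := nbhs_filter t) _ ft z zt.
by exists d.
Qed.

Lemma continuous_ball_lt (R : realType) (f : R -> R) t z :
  {for t, continuous f} -> f t < z ->
  exists2 d, 0 < d & forall x, `|t - x| < d -> f x < z.
Proof.
move=> ft tz; have /nbhs_ballP[d d0 Hd] := cvgr_lt (FF := nbhs_filter t) _ ft z tz.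
by exists d.
Qed.

Lemma continuous_lt_sep (R : realType) (f : R -> R) s t :
  {for s, continuous f} -> {for t, continuous f} -> f s < f t ->
  exists2 d, 0 < d & forall x y, `|s - x| < d -> `|t - y| < d -> f x < f y.
Proof.
move=> fs ft st; pose m := (f s + f t) / 2.
have [ds ds0 Hs] : exists2 ds, 0 < ds & forall x, `|s - x| < ds -> f x < m.
  by apply: continuous_ball_lt fs _; rewrite /m; lra.
have [dt dt0 Ht] : exists2 dt, 0 < dt & forall y, `|t - y| < dt -> m < f y.
  by apply: continuous_ball_gt ft _; rewrite /m; lra.
exists (Num.min ds dt); first by rewrite lt_min ds0.
move=> x y; rewrite !lt_min => /andP[xs _] /andP[_ yt].
exact: lt_trans (Hs x xs) (Ht y yt).
Qed.

Lemma le_add_ln_of_xderive (R : realType) (f : R -> R) (c u : R) : 0 < u ->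
  (forall x, u <= x -> derivable f x 1) ->
  (forall x, u <= x -> x * derive1 f x <= - c) ->
  forall t, u <= t -> f t + c * ln t <= f u + c * ln u.
Proof.
move=> u0 fD fc t ut; pose h := f + c \*: (@ln R).
have hD x : u <= x -> is_derive x 1 h (derive1 f x + c *: x^-1).
  move=> ux; apply: is_deriveD; first by rewrite derive1E; exact/derivableP/fD.
  exact: is_deriveZ (is_derive1_ln (lt_le_trans u0 ux)).
have hc : {within `[u, +oo[, continuous h}.
  apply: continuous_in_subspaceT => x; rewrite inE /= in_itv /= andbT => ux.
  by apply/differentiable_continuous/derivable1_diffP; case: (hD x ux).
apply: (ler0_derive1_nincry _ _ hc (lexx u) ut) => x; rewrite in_itv /= andbT => /ltW ux.
  by case: (hD x ux).
have x0 : 0 < x := lt_le_trans u0 ux.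
have hDx := hD x ux; rewrite derive1E derive_val -(pmulr_rle0 _ x0) mulrDr.
by rewrite /GRing.scale /= mulrCA mulfV ?gt_eqF // mulr1; have := fc x ux; lra.
Qed.

Section Roots.
Variables (R : realType) (n : nat).
Hypothesis n_gt0 : (0 < n)%N.

Lemma exprn_powR_inv (a : R) : 0 <= a -> (a `^ n%:R^-1) ^+ n = a.
Proof.
move=> a0; rewrite -powR_mulrn ?powR_ge0 // -powRrM mulVf ?pnatr_eq0 -?lt0n //.
by rewrite powRr1.
Qed.

Lemma powR_inv_exprn (a : R) : 0 <= a -> (a ^+ n) `^ n%:R^-1 = a.
Proof.
move=> a0; rewrite -powR_mulrn // -powRrM mulfV ?pnatr_eq0 -?lt0n //.
by rewrite powRr1.
Qed.

End Roots.

Section Lambda.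
Variables (R : realType) (k : nat) (l : R -> R).
Implicit Types (a b s t x y : R).

Local Notation supp := (supp_of l).

Hypothesis k_gt0 : (0 < k)%N.
Hypothesis l_ge0 : forall t, 0 < t -> 0 <= l t.
Hypothesis l_cont : forall t, 0 < t -> {for t, continuous l}.
Hypothesis l_deriv : forall t, supp t ->
  [/\ derivable l t 1, {for t, continuous (derive1 l)} & derive1 l t < 0].

Lemma is_derive_l t : supp t -> is_derive t 1 l (derive1 l t).
Proof. by case/l_deriv => lD _ _; rewrite derive1E; exact/derivableP. Qed.

Lemma continuous_l_itv a b : 0 < a -> {within `[a, b], continuous l}.
Proof.
move=> a0; apply: continuous_in_subspaceT => x; rewrite inE /= in_itv /=.
by case/andP => ax _; exact/l_cont/(lt_le_trans a0 ax).
Qed.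

Lemma supp_of_le s t : supp t -> 0 < s -> s <= t -> supp s.
Proof. by case=> _ tb s0 st; split => //; apply: le_lt_trans tb; rewrite lee_fin. Qed.

Lemma l_decr s t : supp s -> s < t -> (t%:E <= supp_bound l)%E -> l t < l s.
Proof.
move=> Ss st tb; have s0 : 0 < s by case: Ss.
have Sx x : x \in `]s, t[ -> supp x.
  rewrite in_itv /= => /andP[sx xt]; split; first exact: lt_trans sx.
  by apply: lt_le_trans tb; rewrite lte_fin.
have [c cI E] := MVT st (fun x xI => is_derive_l (Sx x xI)) (@continuous_l_itv s t s0).
have [_ _ dc] := l_deriv (Sx c cI).
by rewrite -subr_lt0 E nmulr_rlt0 // subr_gt0.
Qed.

Lemma supp_l_gt0 t : supp t -> 0 < l t.
Proof.
move=> St; have [_ /ereal_sup_gt[_ [s [s0 ls0] <-]]] := St; rewrite lte_fin => ts.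
apply: (lt_trans ls0); apply: (l_decr St ts).
by apply: ereal_sup_ubound; exists s.
Qed.

Lemma l_gt0_supp t : 0 < t -> 0 < l t -> supp t.
Proof.
move=> t0 lt0; split => //.
have [d d0 Hd] := continuous_ball_gt (l_cont t0) lt0.
have td : `|t - (t + d / 2)| < d by rewrite opprD addNKr normrN gtr0_norm; lra.
apply: (@lt_le_trans _ _ (t + d / 2)%:E); first by rewrite lte_fin; lra.
by apply: ereal_sup_ubound; exists (t + d / 2) => //; split; [lra|exact: Hd].
Qed.

Lemma supp_l_inj s t : supp s -> supp t -> l s = l t -> s = t.
Proof.
move=> Ss St lst; case: (ltgtP s t) => // [st|ts].
  by have := l_decr Ss st (ltW St.2); rewrite lst ltxx.
by have := l_decr St ts (ltW Ss.2); rewrite lst ltxx.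
Qed.

Lemma psi_lt0 t : supp t -> psi k l t < 0.
Proof.
move=> St; have [t0 _] := St; have [_ _ dl] := l_deriv St.
by rewrite /psi pmulr_llt0 ?invr_gt0 ?powR_gt0 ?supp_l_gt0 // pmulr_rlt0.
Qed.

Lemma psi_cont t : supp t -> {for t, continuous (psi k l)}.
Proof.
move=> St; have lt0 := supp_l_gt0 St; have [_ dl_cont _] := l_deriv St.
have q0 : l t `^ (1 - k%:R^-1) != 0 by rewrite gt_eqF // powR_gt0.
apply: cvgM; first exact: cvgM cvg_id dl_cont.
apply: cvgV => //; apply: (@continuous_comp _ _ _ l (fun y => y `^ (1 - k%:R^-1))).
  exact/l_cont/St.1.
apply/differentiable_continuous/derivable1_diffP.
by case: (is_derive1_powR (1 - k%:R^-1) lt0).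
Qed.

Definition lroot t : R := l t `^ k%:R^-1.

Lemma lroot_gt0 t : supp t -> 0 < lroot t.
Proof. by move=> St; rewrite powR_gt0 ?supp_l_gt0. Qed.

Lemma lrootXn t : supp t -> lroot t ^+ k = l t.
Proof. by move=> St; rewrite exprn_powR_inv // ltW ?supp_l_gt0. Qed.

Lemma lroot_decr s t : supp s -> supp t -> s < t -> lroot t < lroot s.
Proof.
move=> Ss St st; have kV : 0 < k%:R^-1 :> R by rewrite invr_gt0 ltr0n.
rewrite /lroot gt0_ltr_powR ?nnegrE ?ltW ?supp_l_gt0 //.
exact: l_decr Ss st (ltW St.2).
Qed.

Lemma is_derive_lroot t : supp t -> is_derive t 1 lroot (psi k l t / (k%:R * t)).
Proof.
move=> St; have lt0 := supp_l_gt0 St; have [t0 _] := St.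
have -> : psi k l t / (k%:R * t) = k%:R^-1 * l t `^ (k%:R^-1 - 1) * derive1 l t.
  rewrite /psi -opprB powRN; field.
  by rewrite (gt_eqF t0) pnatr_eq0 -lt0n k_gt0 gt_eqF ?powR_gt0.
exact: is_derive1_comp (is_derive1_powR _ lt0) (is_derive_l St).
Qed.

Lemma ln_lroot_cauchy a b : supp a -> supp b -> a < b ->
  exists2 tau, tau \in `]a, b[ & (ln b - ln a) / (lroot b - lroot a) = k%:R / psi k l tau.
Proof.
move=> Sa Sb ab.
have Sab x : x \in `[a, b] -> supp x.
  by rewrite in_itv /= => /andP[ax xb]; exact: supp_of_le Sb (lt_le_trans Sa.1 ax) xb.
have Soo x : x \in `]a, b[ -> supp x by move=> x_ab; apply: Sab; exact: subset_itv_oo_cc.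
have ln_cont : {within `[a, b], continuous (@ln R)}.
  by apply: continuous_in_subspaceT => x /[!inE] /Sab [x0 _]; exact: continuous_ln.
have lroot_cont : {within `[a, b], continuous lroot}.
  apply: continuous_in_subspaceT => x /[!inE] /Sab Sx.
  by apply/differentiable_continuous/derivable1_diffP; case: (is_derive_lroot Sx).
have ln_deriv x : x \in `]a, b[ -> is_derive x 1 (@ln R) x^-1.
  by move/Soo => [x0 _]; exact: is_derive1_ln.
have lroot_deriv x : x \in `]a, b[ -> is_derive x 1 lroot (psi k l x / (k%:R * x)).
  by move/Soo; exact: is_derive_lroot.
have dlroot_neq0 x : x \in `]a, b[ -> psi k l x / (k%:R * x) != 0.
  move/Soo => Sx; have k0 : 0 < k%:R :> R by rewrite ltr0n.
  by rewrite mulf_neq0 ?invr_eq0 ?(lt_eqF (psi_lt0 Sx)) // gt_eqF // mulr_gt0 // Sx.1.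
have [tau tau_ab E] := cauchy_MVT ab ln_cont lroot_cont ln_deriv lroot_deriv dlroot_neq0.
exists tau => //; rewrite -E; have Stau := Soo _ tau_ab.
by field; rewrite (gt_eqF Stau.1) (lt_eqF (psi_lt0 Stau)) pnatr_eq0 -lt0n k_gt0.
Qed.

Lemma g_dom_between x y z : g_dom k l x -> g_dom k l y -> x <= z -> z <= y -> g_dom k l z.
Proof.
move=> [x0 _] [_ yk] xz zy; have z0 := lt_le_trans x0 xz; split => //.
have y0 := lt_le_trans z0 zy.
by apply: le_lt_trans yk; rewrite lee_fin lerXn2r // nnegrE ltW.
Qed.

Section InverseOfLroot.
Variable g : R -> R.
Hypothesis g_inv : forall s, g_dom k l s -> supp (g s) /\ l (g s) = s ^+ k.

Lemma lroot_g s : g_dom k l s -> lroot (g s) = s.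
Proof.
by move=> gs; have [_ lgs] := g_inv gs; rewrite /lroot lgs powR_inv_exprn // ltW //; case: gs.
Qed.

Lemma g_decr x y : g_dom k l x -> g_dom k l y -> x < y -> g y < g x.
Proof.
move=> gx gy xy; have [Sgx _] := g_inv gx; have [Sgy _] := g_inv gy.
rewrite ltNge le_eqVlt; apply/negP => /orP[/eqP gxy|gxy].
  by move: xy; rewrite -(lroot_g gx) -(lroot_g gy) gxy ltxx.
by have := lroot_decr Sgx Sgy gxy; rewrite (lroot_g gx) (lroot_g gy) ltNge (ltW xy).
Qed.

Lemma g_lroot t : supp t -> g_dom k l (lroot t) /\ g (lroot t) = t.
Proof.
move=> St; have [t0 tb] := St.
have dom : g_dom k l (lroot t).
  split; first exact: lroot_gt0.
  have St2 : supp (t / 2) by apply: supp_of_le St _ _; lra.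
  rewrite lrootXn //; apply: (@lt_le_trans _ _ (l (t / 2))%:E).
    by rewrite lte_fin; apply: l_decr St2 _ (ltW tb); lra.
  by apply: ereal_sup_ubound; exists (t / 2) => //=; lra.
split => //; have [Sg lg] := g_inv dom; apply: supp_l_inj Sg St _.
by rewrite lg lrootXn.
Qed.

Lemma slope_ln_g x y : g_dom k l x -> g_dom k l y -> x < y ->
  exists2 tau, g y < tau < g x & slope (@ln R \o g) x y = k%:R / psi k l tau.
Proof.
move=> gx gy xy; have [Sgx _] := g_inv gx; have [Sgy _] := g_inv gy.
have [tau] := ln_lroot_cauchy Sgy Sgx (g_decr gx gy xy).
by rewrite in_itv /= (lroot_g gx) (lroot_g gy) slopeC => tau_in E; exists tau.
Qed.

End InverseOfLroot.

Lemma exists_l_lt_fin_supp r u y : supp_bound l = r%:E -> supp u -> 0 < y ->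
  exists t, [/\ supp t, u <= t & l t < y].
Proof.
move=> rE [u0 ub] y0; rewrite rE lte_fin in ub; have r0 := lt_trans u0 ub.
have lr0 : l r = 0.
  apply/eqP; rewrite eq_le l_ge0 // andbT leNgt; apply/negP.
  by move=> /(l_gt0_supp r0)[_]; rewrite rE ltxx.
have [d d0 Hd] : exists2 d, 0 < d & forall x, `|r - x| < d -> l x < y.
  by apply: continuous_ball_lt (l_cont r0) _; rewrite lr0.
pose e := Num.min (d / 2) ((r - u) / 2).
have e0 : 0 < e by rewrite lt_min !divr_gt0 // subr_gt0.
have ed : e < d by apply: (@le_lt_trans _ _ (d / 2)); [rewrite ge_min lexx|lra].
have eu : e <= (r - u) / 2 by rewrite ge_min lexx orbT.
exists (r - e); split; [split|lra|].
- lra.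
- by rewrite rE lte_fin; lra.
- by apply: Hd; rewrite opprB addrC subrK gtr0_norm.
Qed.

Section PsiDecreasing.
Hypothesis psi_decr : forall s t, supp s -> supp t -> s <= t -> psi k l t <= psi k l s.

Lemma exists_l_lt_inf_supp u y : supp_bound l = +oo%E -> supp u -> 0 < y ->
  exists t, [/\ supp t, u <= t & l t < y].
Proof.
move=> supp_inf Su y0; have [u0 _] := Su.
have Sge t : u <= t -> supp t by move=> ut; split; [exact: lt_le_trans ut|rewrite supp_inf ltry].
have [//|no_t] := pselect (exists t, [/\ supp t, u <= t & l t < y]); exfalso.
have ly t : u <= t -> y <= l t.
  by move=> ut; rewrite leNgt; apply/negP => lty; apply: no_t; exists t; split => //; exact: Sge.
pose e := 1 - k%:R^-1 : R.
pose c := - psi k l u * y `^ e.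
have c0 : 0 < c by rewrite /c mulr_gt0 ?powR_gt0 // oppr_gt0 psi_lt0.
have xdl t : u <= t -> t * derive1 l t <= - c.
  move=> ut; have St := Sge t ut; have lt0 := supp_l_gt0 St.
  have -> : t * derive1 l t = psi k l t * l t `^ e.
    by rewrite /psi -mulrA mulVf ?mulr1 // gt_eqF // powR_gt0.
  rewrite /c mulNr opprK; apply: (le_trans (ler_wpM2r (powR_ge0 _ _) (psi_decr Su St ut))).
  rewrite ler_nM2l ?psi_lt0 // ge0_ler_powR ?nnegrE ?(ltW y0) ?(ltW lt0) ?ly //.
  by rewrite subr_ge0 invf_le1 ?ler1n ?ltr0n.
have uT : u <= u * expR (l u / c).
  by rewrite ler_peMr ?(ltW u0) // ltW // expR_gt1 divr_gt0 ?supp_l_gt0.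
have lD t : u <= t -> derivable l t 1 by move=> /Sge /l_deriv[].
have := le_add_ln_of_xderive u0 lD xdl uT.
rewrite lnM ?posrE ?expR_gt0 // expRK mulrDr mulrCA mulfV ?gt_eqF // mulr1.
by have := ly _ uT; lra.
Qed.

Lemma exists_l_lt u y : supp u -> 0 < y -> exists t, [/\ supp t, u <= t & l t < y].
Proof.
move=> Su; have := Su.2; case E: (supp_bound l) => [r| |] // _.
  exact: exists_l_lt_fin_supp E Su.
exact: exists_l_lt_inf_supp.
Qed.

Lemma l_surj y : 0 < y -> (y%:E < sup_norm l)%E -> exists t, supp t /\ l t = y.
Proof.
move=> y0 /ereal_sup_gt[_ [u u0 <-]]; rewrite lte_fin => ylu.
have Su : supp u := l_gt0_supp u0 (lt_trans y0 ylu).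
have [t [St ut lty]] := exists_l_lt Su y0.
have y_between : Num.min (l u) (l t) <= y <= Num.max (l u) (l t).
  by rewrite ge_min le_max (ltW lty) (ltW ylu) orbT.
have [c /[!in_itv] /andP[uc ct] lcy] := IVT ut (@continuous_l_itv u t u0) y_between.
by exists c; split => //; exact: supp_of_le St (lt_le_trans u0 uc) ct.
Qed.

Lemma Lambda_of_psi_decr : in_Lambda k l.
Proof.
split => //; first by move=> s t Ss St st; exact: l_decr Ss st (ltW St.2).
have /choice[g g_inv] : forall s, exists t, g_dom k l s -> supp t /\ l t = s ^+ k.
  move=> s; have [[s0 sk]|not_dom] := pselect (g_dom k l s); last by exists 0.
  by have [t St] := l_surj (exprn_gt0 k s0) sk; exists t.
exists g; split => //.
apply: (concave_of_slope_le3 (F := @ln R \o g) g_dom_between) => x z y gx gz gy xz zy.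
have [t1 /andP[gzt1 t1gx] ->] := slope_ln_g g_inv gx gz xz.
have [t2 /andP[gyt2 t2gz] ->] := slope_ln_g g_inv gz gy zy.
have St1 : supp t1 := supp_of_le (g_inv _ gx).1 (lt_trans (g_inv _ gz).1.1 gzt1) (ltW t1gx).
have St2 : supp t2 := supp_of_le (g_inv _ gz).1 (lt_trans (g_inv _ gy).1.1 gyt2) (ltW t2gz).
rewrite ler_pdiv2l_neg ?ltr0n ?psi_lt0 //.
exact: psi_decr St2 St1 (ltW (lt_trans t2gz gzt1)).
Qed.

End PsiDecreasing.

Lemma psi_decr_of_Lambda : in_Lambda k l ->
  forall s t, supp s -> supp t -> s <= t -> psi k l t <= psi k l s.
Proof.
case=> _ _ _ [g [g_inv ln_g_conc]] s t Ss St.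
rewrite le_eqVlt => /orP[/eqP -> //|st]; rewrite leNgt; apply/negP => psi_st.
have [d d0 psi_sep] := continuous_lt_sep (psi_cont Ss) (psi_cont St) psi_st.
pose m := Num.min d (Num.min s (t - s)).
have m0 : 0 < m by rewrite !lt_min d0 Ss.1 subr_gt0.
have [md ms mts] : [/\ m <= d, m <= s & m <= t - s] by rewrite !ge_min !lexx !orbT.
have Ssh : supp (s - m / 2) by apply: supp_of_le Ss _ _; lra.
have Sth : supp (t - m / 2) by apply: supp_of_le St _ _; lra.
have [dom1 g1] := g_lroot g_inv St.
have [dom2 g2] := g_lroot g_inv Sth.
have [dom3 g3] := g_lroot g_inv Ss.
have [dom4 g4] := g_lroot g_inv Ssh.
have x12 : lroot t < lroot (t - m / 2) by apply: lroot_decr Sth St _; lra.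
have x23 : lroot (t - m / 2) < lroot s by apply: lroot_decr Ss Sth _; lra.
have x34 : lroot s < lroot (s - m / 2) by apply: lroot_decr Ssh Ss _; lra.
have := concave_slope_le4 ln_g_conc dom1 dom2 dom3 dom4 x12 x23 x34.
have [t1 /andP[t1a t1b] ->] := slope_ln_g g_inv dom3 dom4 x34.
have [t2 /andP[t2a t2b] ->] := slope_ln_g g_inv dom1 dom2 x12.
rewrite g1 g2 g3 g4 in t1a t1b t2a t2b.
have St1 : supp t1 by apply: supp_of_le Ss _ (ltW t1b); lra.
have St2 : supp t2 by apply: supp_of_le St _ (ltW t2b); lra.
rewrite ler_pdiv2l_neg ?ltr0n ?psi_lt0 // leNgt psi_sep //.
  by rewrite gtr0_norm ?subr_gt0 //; lra.
by rewrite gtr0_norm ?subr_gt0 //; lra.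
Qed.
End Lambda.

Theorem mainTheorem9 (R : realType) (k : nat) (l : R -> R) :
  (0 < k)%N ->
  (forall t, 0 < t -> 0 <= l t) ->
  (forall t, 0 < t -> {for t, continuous l}) ->
  (forall t, supp_of l t ->
     [/\ derivable l t 1, {for t, continuous (derive1 l)} & derive1 l t < 0]) ->
  (in_Lambda k l <->
   (forall s t, supp_of l s -> supp_of l t -> s <= t -> psi k l t <= psi k l s)).
Proof.
move=> k_gt0 l_ge0 l_cont l_deriv; split.
  exact: psi_decr_of_Lambda.
exact: Lambda_of_psi_decr.
Qed.
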